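(* Let $d\in\{1,2\}$ and $\mathcal U$ a supercritical update family. There exist $u\in S^{d-1}$, a nonempty set $R\subset\mathbb Z^d$ of the form - if $d=1$: $R=[0,a_1u[\,\cap\,\mathbb Z$ with $a_1>0$ and $a_1u\in\mathbb Z$; - if $d=2$: $R=([0,a_1[\,u+[0,a_2]u^\perp)\cap\mathbb Z^2$ with $a_1>0$, $a_2\ge0$, $a_1u\in\mathbb Z^2$, where $u^\perp$ is a unit vector orthogonal to $u$, and a finite sequence of sites $x_1,\dots,x_p$ in $(a_1u+R)\cup(2a_1u+R)$ such that the following holds for the KCM with update family $\mathcal U$ (any parameter $q$): if at some time $s$ all sites of $R$ are at $0$, and there are times $s<s_1<\dots<s_p$ with $s_i\in\mathcal P^0_{x_i}$ for all $i$, and there is no 1-clock ring at any site of $R\cup\{x_1,\dots,x_p\}$ during $]s,s_p]$, then at time $s_p$ all sites of $a_1u+R$ are at $0$.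
   Context: Update family $\mathcal U$: finite collection of finite nonempty subsets of $\mathbb Z^d\setminus\{0\}$; $u\in S^{d-1}$ is stable if no $X\in\mathcal U$ lies in $\{x:\langle x,u\rangle<0\}$; supercritical means some open hemisphere of $S^{d-1}$ contains no stable direction (for $d=1$ this means some direction in $\{-1,1\}$ is unstable). KCM with parameter $q$ via Harris construction: independent Poisson processes $\mathcal P^0_x$ (rate $q$, 0-clock rings) and $\mathcal P^1_x$ (rate $1-q$, 1-clock rings) at each site; at a ring at $x$, if some $x+X$ ($X\in\mathcal U$) is all $0$ just before, $x$ is set to $0$ (for a 0-clock ring) or $1$ (for a 1-clock ring); otherwise no change. *)

From Stdlib Require Import Reals List ZArith.
From Stdlib Require Fin.
Import ListNotations.
Open Scope R_scope.

Definition site (d : nat) := Fin.t d -> Z.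
Definition vec (d : nat) := Fin.t d -> R.

Fixpoint sumF (d : nat) : (Fin.t d -> R) -> R :=
  match d return (Fin.t d -> R) -> R with
  | O => fun _ => 0
  | S n => fun f => f Fin.F1 + sumF n (fun i => f (Fin.FS i))
  end.

Definition dot (d : nat) (u v : vec d) : R := sumF d (fun i => u i * v i).

Definition toR (d : nat) (x : site d) : vec d := fun i => IZR (x i).

Definition sadd (d : nat) (x y : site d) : site d := fun i => (x i + y i)%Z.
Definition sscale (d : nat) (k : Z) (x : site d) : site d := fun i => (k * x i)%Z.

Definition unit_vec (d : nat) (u : vec d) : Prop := dot d u u = 1.

(** An update family: a finite collection (list) of finite (list) nonempty
    subsets of Z^d \ {0}. *)
Definition update_family (d : nat) (U : list (list (site d))) : Prop :=
  (forall X, In X U -> X <> []) /\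
  (forall X x, In X U -> In x X -> exists i, x i <> 0%Z).

Definition stable (d : nat) (U : list (list (site d))) (u : vec d) : Prop :=
  unit_vec d u /\
  ~ (exists X, In X U /\ forall x, In x X -> dot d (toR d x) u < 0).

Definition supercritical (d : nat) (U : list (list (site d))) : Prop :=
  exists v : vec d, unit_vec d v /\
    forall u : vec d, unit_vec d u -> dot d u v > 0 -> ~ stable d U u.

Inductive spin := Zero | One.

Definition trajectory (d : nat) := R -> site d -> spin.
Definition clocks (d : nat) := site d -> R -> Prop.

Definition constraint_before (d : nat) (U : list (list (site d)))
    (eta : trajectory d) (x : site d) (t : R) : Prop :=
  exists X, In X U /\ exists eps, eps > 0 /\
    forall t', t - eps < t' < t -> forall y, In y X -> eta t' (sadd d x y) = Zero.

Definition unchanged_at (d : nat) (eta : trajectory d) (x : site d) (t : R) : Prop :=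
  exists eps, eps > 0 /\ forall t', t - eps < t' < t -> eta t' x = eta t x.

(** Pathwise description of the Harris graphical construction of the KCM
    with update family U driven by the 0-clocks P0 and 1-clocks P1
    (for almost every realisation: locally finite, disjoint clocks). *)
Definition harris_kcm (d : nat) (U : list (list (site d)))
    (P0 P1 : clocks d) (eta : trajectory d) : Prop :=
  (forall x a b, exists l : list R,
      forall t, a <= t <= b -> (P0 x t \/ P1 x t) -> In t l) /\
  (forall x t, ~ (P0 x t /\ P1 x t)) /\
  (forall x s t, s <= t ->
      (forall r, s < r <= t -> ~ P0 x r /\ ~ P1 x r) -> eta t x = eta s x) /\
  (forall x t, P0 x t ->
      (constraint_before d U eta x t -> eta t x = Zero) /\
      (~ constraint_before d U eta x t -> unchanged_at d eta x t)) /\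
  (forall x t, P1 x t ->
      (constraint_before d U eta x t -> eta t x = One) /\
      (~ constraint_before d U eta x t -> unchanged_at d eta x t)).

Fixpoint incr_from (s : R) (ts : list R) : Prop :=
  match ts with
  | [] => True
  | t :: r => s < t /\ incr_from t r
  end.

Definition R_shape (d : nat) (u : vec d) (a1 : R) (Rset : site d -> Prop) : Prop :=
  (d = 1%nat ->
     forall x, Rset x <-> exists t, 0 <= t < a1 /\ forall i, toR d x i = t * u i) /\
  (d = 2%nat ->
     exists (uperp : vec d) (a2 : R),
       unit_vec d uperp /\ dot d u uperp = 0 /\ 0 <= a2 /\
       forall x, Rset x <-> exists t s, 0 <= t < a1 /\ 0 <= s <= a2 /\
                   forall i, toR d x i = t * u i + s * uperp i).

(* A 0-ring at x sets x to 0 whenever some rule x + X is entirely at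
   0, and without 1-rings a 0 never disappears.  Hence if a finite list L
   of sites comes with a potential such that every site of L has a rule
   all of whose sites are either in R or in L with smaller potential, then
   ringing the 0-clocks of L in order, |L| times, fills L with zeros
   (after k passes, the k sites of lowest potential are at 0).

   In dimension 1, L is
   a1 u + R for the unstable direction u.  In dimension 2 we pick an
   integer direction w very close to the centre of the stable-free
   hemisphere (Dirichlet's approximation theorem), so that the boundary
   directions of the strip and a whole fan of directions around w are
   unstable, uniformly by compactness; the potential is then the
   coordinate along w corrected by a convex piecewise-linear profile in
   the transverse coordinate. *)
From Stdlib Require Import Reals List ZArith Lia Lra Psatz.
From Stdlib Require Import Classical ClassicalEpsilon FunctionalExtensionality.
From Stdlib Require Fin.
Import ListNotations.
Open Scope R_scope.

Definition to_bool (P : Prop) : bool :=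
  if excluded_middle_informative P then true else false.

Lemma to_bool_true (P : Prop) : to_bool P = true <-> P.
Proof. unfold to_bool; destruct (excluded_middle_informative P); intuition congruence. Qed.

Lemma to_bool_false (P : Prop) : to_bool P = false <-> ~ P.
Proof. unfold to_bool; destruct (excluded_middle_informative P); intuition congruence. Qed.

Lemma filter_length_mono {A} (p q : A -> bool) (l : list A) :
  (forall a, p a = true -> q a = true) ->
  (length (filter p l) <= length (filter q l))%nat.
Proof.
  intros Hpq; induction l as [|a l IH]; simpl; [lia|].
  destruct (p a) eqn:Ep; [rewrite (Hpq a Ep); simpl; lia|].
  destruct (q a); simpl; lia.
Qed.

Lemma filter_length_strict {A} (p q : A -> bool) (l : list A) (e : A) :
  (forall a, p a = true -> q a = true) -> In e l -> q e = true -> p e = false ->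
  (length (filter p l) < length (filter q l))%nat.
Proof.
  intros Hpq; induction l as [|a l IH]; simpl; [tauto|].
  intros [<-|Hin] Hq Hp.
  - rewrite Hp, Hq; simpl. pose proof (filter_length_mono p q l Hpq); lia.
  - specialize (IH Hin Hq Hp).
    destruct (p a) eqn:Ep; [rewrite (Hpq a Ep); simpl; lia|].
    destruct (q a); simpl; lia.
Qed.

(* Maximum and minimum of a nonempty list of reals (0 on the empty list). *)
Definition maxl (l : list R) : R :=
  match l with [] => 0 | c :: l' => fold_right Rmax c l' end.
Definition minl (l : list R) : R :=
  match l with [] => 0 | c :: l' => fold_right Rmin c l' end.

Lemma maxl_ge (l : list R) (x : R) : In x l -> x <= maxl l.
Proof.
  destruct l as [|c l]; [intros []|]. simpl.
  revert x; induction l as [|a l IH]; intros x Hx; simpl in *.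
  - destruct Hx as [->|[]]; lra.
  - pose proof (Rmax_l a (fold_right Rmax c l)). pose proof (Rmax_r a (fold_right Rmax c l)).
    destruct Hx as [E|[E|Hx]]; subst;
      [pose proof (IH x (or_introl eq_refl)) | | pose proof (IH x (or_intror Hx))]; lra.
Qed.

Lemma maxl_in (l : list R) : l <> [] -> In (maxl l) l.
Proof.
  destruct l as [|c l]; [tauto|]. intros _. simpl.
  induction l as [|a l IH]; simpl; [auto|].
  destruct (Rle_dec a (fold_right Rmax c l)).
  - rewrite Rmax_right by lra. destruct IH as [E|E]; [left|right; right]; auto.
  - rewrite Rmax_left by lra. right; left; auto.
Qed.

Lemma minl_le (l : list R) (x : R) : In x l -> minl l <= x.
Proof.
  destruct l as [|c l]; [intros []|]. simpl.
  revert x; induction l as [|a l IH]; intros x Hx; simpl in *.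
  - destruct Hx as [->|[]]; lra.
  - pose proof (Rmin_l a (fold_right Rmin c l)). pose proof (Rmin_r a (fold_right Rmin c l)).
    destruct Hx as [E|[E|Hx]]; subst;
      [pose proof (IH x (or_introl eq_refl)) | | pose proof (IH x (or_intror Hx))]; lra.
Qed.

Lemma minl_in (l : list R) : l <> [] -> In (minl l) l.
Proof.
  destruct l as [|c l]; [tauto|]. intros _. simpl.
  induction l as [|a l IH]; simpl; [auto|].
  destruct (Rle_dec a (fold_right Rmin c l)).
  - rewrite Rmin_left by lra. right; left; auto.
  - rewrite Rmin_right by lra. destruct IH as [E|E]; [left|right; right]; auto.
Qed.

Lemma last_cons {A} (a : A) (l : list A) (d : A) : last (a :: l) d = last l a.
Proof.
  revert a d; induction l as [|b l IH]; intros a d; [reflexivity|].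
  change (last (a :: b :: l) d) with (last (b :: l) d). now rewrite !IH.
Qed.

Lemma last_app {A} (a b : list A) (t0 : A) : last (a ++ b) t0 = last b (last a t0).
Proof.
  revert t0; induction a as [|x a IH]; intros t0; [reflexivity|].
  change ((x :: a) ++ b) with (x :: (a ++ b)). now rewrite !last_cons, IH.
Qed.

Lemma incr_last_ge (t0 : R) (ts : list R) : incr_from t0 ts -> t0 <= last ts t0.
Proof.
  revert t0; induction ts as [|a ts IH]; intros t0 H; [simpl; lra|].
  rewrite last_cons. destruct H as [H1 H2]. specialize (IH a H2). lra.
Qed.

Lemma incr_app (t0 : R) (a b : list R) :
  incr_from t0 (a ++ b) -> incr_from t0 a /\ incr_from (last a t0) b.
Proof.
  revert t0; induction a as [|x a IH]; intros t0 H; [simpl in *; auto|].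
  destruct H as [H1 H2]. rewrite last_cons. destruct (IH x H2). simpl; auto.
Qed.

Definition sweepable (d : nat) (U : list (list (site d))) (Rs : site d -> Prop)
    (L : list (site d)) (Th : site d -> R) : Prop :=
  forall x, In x L -> exists X, In X U /\ forall y, In y X ->
    Rs (sadd d x y) \/ (In (sadd d x y) L /\ Th (sadd d x y) < Th x).

Definition rank {A} (Th : A -> R) (L : list A) (x : A) : nat :=
  length (filter (fun z => to_bool (Th z < Th x)) L).

Lemma rank_lt {A} (Th : A -> R) (L : list A) (x y : A) :
  In y L -> Th y < Th x -> (rank Th L y < rank Th L x)%nat.
Proof.
  intros Hy Hlt. unfold rank. apply (filter_length_strict _ _ L y); auto.
  - intros a Ha. rewrite to_bool_true in Ha |- *. lra.
  - now rewrite to_bool_true.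
  - rewrite to_bool_false; lra.
Qed.

Lemma rank_bound {A} (Th : A -> R) (L : list A) (x : A) :
  In x L -> (rank Th L x < length L)%nat.
Proof.
  intros Hx. pose proof (filter_length_strict (fun z => to_bool (Th z < Th x))
    (fun _ => true) L x (fun _ _ => eq_refl) Hx eq_refl) as H.
  rewrite to_bool_false in H. specialize (H (Rlt_irrefl _)).
  now rewrite filter_true in H.
Qed.

Definition sweep_schedule {A} (L : list A) : list A := concat (repeat L (length L)).

Lemma in_sweep_schedule {A} (L : list A) (x : A) : In x (sweep_schedule L) <-> In x L.
Proof.
  unfold sweep_schedule. rewrite in_concat. split.
  - intros [l [Hl Hx]]. now apply repeat_spec in Hl as ->.
  - intros Hx. exists L; split; [|exact Hx]. destruct L; [destruct Hx|].
    simpl; left; reflexivity.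
Qed.

Section Dynamics.
Variables (d : nat) (U : list (list (site d))) (P0 P1 : clocks d) (eta : trajectory d).
Hypothesis Hkcm : harris_kcm d U P0 P1 eta.

Lemma rewind_ring (x : site d) (a r : R) : P0 x r -> a < r ->
  eta r x = Zero \/ exists t', a < t' < r /\ eta t' x = eta r x.
Proof.
  intros HP Har. destruct Hkcm as [_ [_ [_ [H0 _]]]]. destruct (H0 x r HP) as [Hset Hkeep].
  destruct (classic (constraint_before d U eta x r)) as [C|C]; [left; now apply Hset|right].
  destruct (Hkeep C) as [eps [Heps Heq]].
  exists (Rmax (r - eps/2) ((a + r)/2)).
  assert (Ht' : r - eps < Rmax (r - eps/2) ((a + r)/2) < r /\ a < Rmax (r - eps/2) ((a + r)/2))
    by (unfold Rmax; destruct (Rle_dec _ _); lra).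
  split; [lra|]. apply Heq; lra.
Qed.

(* A site at 0 stays at 0 as long as its 1-clock does not ring: a 0-clock
   ring either sets it to 0 or leaves it unchanged.  By induction on the
   number of 0-rings in ]a, t], looking at the last of them. *)
Lemma zero_persists (x : site d) (a b : R) :
  eta a x = Zero -> (forall r, a < r <= b -> ~ P1 x r) ->
  forall t, a <= t <= b -> eta t x = Zero.
Proof.
  intros Ha HP1.
  destruct Hkcm as [Hfin [_ [Hconst _]]].
  destruct (Hfin x a b) as [l Hl].
  set (rings := fun t => filter (fun r => to_bool (a < r <= t /\ P0 x r)) l).
  assert (Hrings : forall t r, t <= b -> a < r <= t -> P0 x r -> In r (rings t)).
  { intros t r Htb Hr HP. apply filter_In. split; [apply Hl; [lra|auto]|].
    now rewrite to_bool_true. }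
  assert (Hrings' : forall t r, In r (rings t) -> a < r <= t /\ P0 x r).
  { intros t r Hr. apply filter_In in Hr. now rewrite <- to_bool_true. }
  intros t Ht. remember (length (rings t)) as n eqn:En. revert t Ht En.
  induction n as [n IH] using (well_founded_induction lt_wf); intros t Ht En.
  destruct (rings t) as [|r0 rs] eqn:Er.
  -
    rewrite (Hconst x a t); [exact Ha|lra|].
    intros r Hr; split; [|apply HP1; lra].
    intro HP. pose proof (Hrings t r ltac:(lra) Hr HP) as Hin. rewrite Er in Hin. exact Hin.
  -
    set (r := maxl (rings t)).
    assert (Hr : In r (rings t)) by (apply maxl_in; rewrite Er; discriminate).
    destruct (Hrings' t r Hr) as [Hrt HP0r].
    assert (Etr : eta t x = eta r x).
    { apply Hconst; [lra|]. intros q Hq; split; [|apply HP1; lra].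
      intro HP. pose proof (maxl_ge _ _ (Hrings t q ltac:(lra) ltac:(lra) HP)) as Hqr.
      fold r in Hqr; lra. }
    rewrite Etr. destruct (rewind_ring x a r HP0r ltac:(lra)) as [Hz|[t' [Ht' Heq]]]; [exact Hz|].
    rewrite <- Heq.
    apply (IH (length (rings t'))); [|lra|reflexivity].
    rewrite En, <- Er.
    apply (filter_length_strict (fun q => to_bool (a < q <= t' /\ P0 x q))
                                (fun q => to_bool (a < q <= t /\ P0 x q)) l r).
    + intros q Hq. rewrite to_bool_true in Hq |- *. destruct Hq as [Hq HPq]. split; [lra|exact HPq].
    + apply filter_In in Hr; tauto.
    + rewrite to_bool_true; split; [lra|auto].
    + rewrite to_bool_false; lra.
Qed.

Lemma zero_ring_sets_zero (x : site d) (X : list (site d)) (a t : R) :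
  P0 x t -> In X U -> a < t ->
  (forall y t', In y X -> a < t' < t -> eta t' (sadd d x y) = Zero) ->
  eta t x = Zero.
Proof.
  intros HP HX Hat Hzero. destruct Hkcm as [_ [_ [_ [H0 _]]]].
  apply (proj1 (H0 x t HP)). exists X; split; [exact HX|].
  exists (t - a); split; [lra|]. intros t' Ht' y Hy. apply Hzero; auto; lra.
Qed.

Section Sweep.
Variables (Rs : site d -> Prop) (L : list (site d)) (Th : site d -> R) (s T : R).
Hypothesis Hsweep : sweepable d U Rs L Th.
Hypothesis HRs : forall y, Rs y -> forall t, s <= t <= T -> eta t y = Zero.
Hypothesis HPL : forall x, In x L -> forall r, s < r <= T -> ~ P1 x r.

Lemma stays_zero (x : site d) (t0 : R) : In x L -> s <= t0 -> eta t0 x = Zero ->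
  forall t, t0 <= t <= T -> eta t x = Zero.
Proof.
  intros Hx Hs Hz. apply (zero_persists x t0 T Hz). intros r Hr. apply HPL; auto; lra.
Qed.

(* One pass of 0-rings through ys (a sublist of L): if at its start all
   sites of rank < r are at 0, then at its end so are the rung sites of
   rank <= r, since all the sites they depend on have rank < r or lie in Rs. *)
Lemma sweep_pass (r : nat) (ys : list (site d)) : forall (us : list R) (t0 : R),
  s <= t0 -> last us t0 <= T -> incl ys L ->
  Forall2 (fun x t => P0 x t) ys us -> incr_from t0 us ->
  (forall x, In x L -> (rank Th L x < r)%nat -> eta t0 x = Zero) ->
  forall x, In x ys -> (rank Th L x <= r)%nat -> eta (last us t0) x = Zero.
Proof.
  induction ys as [|y ys IH]; intros us t0 Hs HT Hincl HF Hincr Hinv x Hx Hrx; [destruct Hx|].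
  inversion HF as [|? t1 ? us' HP0 HF']; subst.
  destruct Hincr as [Ht01 Hincr']. rewrite last_cons in HT |- *.
  pose proof (incr_last_ge _ _ Hincr') as Hge.
  assert (Hinv1 : forall z, In z L -> (rank Th L z < r)%nat -> eta t1 z = Zero).
  { intros z Hz Hrz. apply (stays_zero z t0); auto; lra. }
  destruct Hx as [<-|Hx]; [|now apply (IH us' t1); auto; [lra|intros z Hz; apply Hincl; right]].
  assert (HyL : In y L) by (apply Hincl; left; auto).
  apply (stays_zero y t1); auto; try lra.
  destruct (Hsweep y HyL) as [X [HX HXy]].
  apply (zero_ring_sets_zero y X t0 t1 HP0 HX Ht01). intros q t' Hq Ht'.
  destruct (HXy q Hq) as [HR|[HzL HTh]]; [apply HRs; auto; lra|].
  apply (stays_zero _ t0); auto; try lra.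
  apply Hinv; auto. pose proof (rank_lt Th L y (sadd d y q) HzL HTh). lia.
Qed.

Lemma sweep_rounds (K : nat) : forall (r : nat) (ts : list R) (t0 : R),
  Forall2 (fun x t => P0 x t) (concat (repeat L K)) ts ->
  incr_from t0 ts -> s <= t0 -> last ts t0 <= T ->
  (forall x, In x L -> (rank Th L x < r)%nat -> eta t0 x = Zero) ->
  forall x, In x L -> (rank Th L x < r + K)%nat -> eta (last ts t0) x = Zero.
Proof.
  induction K as [|K IH]; intros r ts t0 HF Hincr Hs HT Hinv x Hx Hr.
  - inversion HF; subst. apply Hinv; auto; lia.
  - simpl in HF. apply Forall2_app_inv_l in HF. destruct HF as [l1 [l2 [HF1 [HF2 ->]]]].
    apply incr_app in Hincr. destruct Hincr as [Hi1 Hi2]. rewrite last_app in HT |- *.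
    pose proof (incr_last_ge _ _ Hi2). pose proof (incr_last_ge _ _ Hi1).
    apply (IH (S r) l2 (last l1 t0)); auto; [lra| |lia].
    intros z Hz Hrz.
    destruct (Nat.lt_ge_cases (rank Th L z) r).
    + apply (stays_zero z t0); auto; lra.
    + apply (sweep_pass r L l1 t0); auto; [lra|intros q; auto|lia].
Qed.
End Sweep.

Lemma sweep_fills (Rs : site d -> Prop) (L : list (site d)) (Th : site d -> R)
    (s : R) (ts : list R) :
  sweepable d U Rs L Th -> incr_from s ts ->
  Forall2 (fun x t => P0 x t) (sweep_schedule L) ts ->
  (forall y, Rs y -> eta s y = Zero) ->
  (forall x r, (Rs x \/ In x (sweep_schedule L)) -> s < r <= last ts s -> ~ P1 x r) ->
  forall x, In x L -> eta (last ts s) x = Zero.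
Proof.
  intros Hsweep Hincr HF HR0 HP1 x Hx.
  pose proof (incr_last_ge _ _ Hincr) as Hge.
  apply (sweep_rounds Rs L Th s (last ts s) Hsweep) with (K := length L) (r := 0%nat);
    auto; try lra.
  - intros y Hy t Ht. apply (zero_persists y s (last ts s) (HR0 y Hy)); auto.
  - intros z Hz r Hr. apply HP1; auto. right. now apply in_sweep_schedule.
  - intros; lia.
  - simpl. now apply rank_bound.
Qed.
End Dynamics.

Definition theorem9_conclusion (d : nat) (U : list (list (site d))) : Prop :=
  exists (u : vec d) (a1 : R) (z : site d) (Rset : site d -> Prop)
         (xs : list (site d)),
    unit_vec d u /\ 0 < a1 /\
    (forall i, toR d z i = a1 * u i) /\
    R_shape d u a1 Rset /\
    (exists y, Rset y) /\
    (forall x, In x xs ->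
       exists y, Rset y /\ (x = sadd d z y \/ x = sadd d (sscale d 2 z) y)) /\
    forall (P0 P1 : clocks d) (eta : trajectory d),
      harris_kcm d U P0 P1 eta ->
      forall (s : R) (ts : list R),
        length ts = length xs ->
        incr_from s ts ->
        Forall2 (fun x t => P0 x t) xs ts ->
        (forall y, Rset y -> eta s y = Zero) ->
        (forall x r, (Rset x \/ In x xs) -> s < r <= last ts s -> ~ P1 x r) ->
        forall y, Rset y -> eta (last ts s) (sadd d z y) = Zero.

Lemma theorem9_of_sweep (d : nat) (U : list (list (site d))) (u : vec d) (a1 : R)
    (z : site d) (Rset : site d -> Prop) (L : list (site d)) (Th : site d -> R) :
  unit_vec d u -> 0 < a1 -> (forall i, toR d z i = a1 * u i) ->
  R_shape d u a1 Rset -> (exists y, Rset y) ->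
  (forall x, In x L -> exists y, Rset y /\ (x = sadd d z y \/ x = sadd d (sscale d 2 z) y)) ->
  (forall y, Rset y -> In (sadd d z y) L) ->
  sweepable d U Rset L Th ->
  theorem9_conclusion d U.
Proof.
  intros Hu Ha1 Hz Hshape Hne HL Hcover Hsweep.
  exists u, a1, z, Rset, (sweep_schedule L).
  do 5 (split; [assumption|]).
  split; [intros x Hx; apply HL, in_sweep_schedule, Hx|].
  intros P0 P1 eta Hkcm s ts _ Hincr HF HR0 HP1 y Hy.
  exact (sweep_fills d U P0 P1 eta Hkcm Rset L Th s ts Hsweep Hincr HF HR0 HP1 _ (Hcover y Hy)).
Qed.

Lemma unstable_has_rule (d : nat) (U : list (list (site d))) (u : vec d) :
  unit_vec d u -> ~ stable d U u ->
  exists X, In X U /\ forall x, In x X -> dot d (toR d x) u < 0.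
Proof. intros Hu Hns. apply NNPP; intro Hn. apply Hns. split; auto. Qed.

Lemma Z_list_bound {A} (f : A -> Z) (l : list A) :
  exists m, (1 <= m)%Z /\ forall a, In a l -> (f a <= m)%Z.
Proof.
  induction l as [|a l [m [Hm IH]]]; [exists 1%Z; split; [lia|intros _ []]|].
  exists (Z.max (f a) m). split; [lia|]. intros b [<-|Hb]; [lia|]. specialize (IH b Hb); lia.
Qed.

Lemma fin1 (i : Fin.t 1) : i = Fin.F1.
Proof.
  pattern i; apply Fin.caseS'; [reflexivity|].
  intro q; apply (Fin.case0 (fun _ => _) q).
Qed.

Definition site1 (a : Z) : site 1 := fun _ => a.

Lemma unit_vec1_sign (v : vec 1) : unit_vec 1 v ->
  exists sg : Z, IZR sg = v Fin.F1 /\ (sg = 1 \/ sg = -1)%Z.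
Proof.
  intros Hv. unfold unit_vec, dot in Hv; simpl in Hv.
  destruct (Rlt_dec 0 (v Fin.F1)); [exists 1%Z | exists (-1)%Z]; split; auto; simpl; nra.
Qed.

Definition segment (sg m : Z) (x : site 1) : Prop := (0 <= sg * x Fin.F1 < m)%Z.

Lemma segment_shape (v : vec 1) (sg m : Z) : IZR sg = v Fin.F1 -> (sg = 1 \/ sg = -1)%Z ->
  R_shape 1 v (IZR m) (segment sg m).
Proof.
  intros Hsg Hsg1.
  assert (Hsg2 : IZR sg * IZR sg = 1)
    by (rewrite <- mult_IZR; destruct Hsg1 as [-> | ->]; reflexivity).
  split; [|intro E; discriminate E]. intros _ x. unfold segment. split.
  - intros Hx. exists (IZR (sg * x Fin.F1)). split.
    + split; [apply IZR_le | apply IZR_lt]; lia.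
    + intro i; rewrite (fin1 i). unfold toR. rewrite mult_IZR, <- Hsg.
      transitivity (IZR (x Fin.F1) * (IZR sg * IZR sg)); [rewrite Hsg2|]; ring.
  - intros [t [Ht Hxt]]. specialize (Hxt Fin.F1). unfold toR in Hxt.
    assert (E : IZR (sg * x Fin.F1) = t).
    { rewrite mult_IZR, Hxt, <- Hsg. transitivity (t * (IZR sg * IZR sg)); [ring|].
      rewrite Hsg2; ring. }
    split; [apply le_IZR | apply lt_IZR]; rewrite E; lra.
Qed.

(* For d = 1, with sg the unstable direction and m the range of a rule X
   pointing backwards: Rset = segment sg m, z = sg m and L = z + Rset,
   swept in the direction sg. *)
Lemma theorem9_dim1 (U : list (list (site 1))) : supercritical 1 U -> theorem9_conclusion 1 U.
Proof.
  intros [v [Hv Hsc]].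
  destruct (unstable_has_rule 1 U v Hv (Hsc v Hv ltac:(rewrite Hv; lra))) as [X [HX HXv]].
  destruct (unit_vec1_sign v Hv) as [sg [Hsg Hsg1]].
  assert (HXs : forall y, In y X -> (sg * y Fin.F1 < 0)%Z).
  { intros y Hy. specialize (HXv y Hy). unfold dot, toR in HXv; simpl in HXv.
    apply lt_IZR. rewrite mult_IZR, Hsg. lra. }
  assert (sgK : forall a, (sg * (sg * a) = a)%Z) by (destruct Hsg1 as [-> | ->]; lia).
  destruct (Z_list_bound (fun y : site 1 => Z.abs (y Fin.F1)) X) as [m [Hm1 HmX]].
  set (L := map (fun j => site1 (sg * (m + Z.of_nat j))) (seq 0 (Z.to_nat m))).
  assert (HL : forall x : site 1, In x L <-> (m <= sg * x Fin.F1 < 2 * m)%Z).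
  { intros x. unfold L. rewrite in_map_iff. split.
    - intros [j [<- Hj]]. apply in_seq in Hj. unfold site1. rewrite sgK. lia.
    - intros Hx. exists (Z.to_nat (sg * x Fin.F1 - m)). split; [|apply in_seq; lia].
      apply functional_extensionality; intro i. rewrite (fin1 i). unfold site1.
      rewrite Z2Nat.id by lia. rewrite <- (sgK (x Fin.F1)) at 2. f_equal; ring. }
  apply (theorem9_of_sweep 1 U v (IZR m) (site1 (sg * m)) (segment sg m) L
           (fun x => IZR (sg * x Fin.F1))); auto.
  - apply IZR_lt; lia.
  - intro i; rewrite (fin1 i); unfold toR, site1; rewrite mult_IZR, Hsg; ring.
  - now apply segment_shape.
  - exists (site1 0). unfold segment, site1. lia.
  - intros x Hx. apply HL in Hx. exists (site1 (x Fin.F1 - sg * m)). split.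
    + unfold segment, site1. destruct Hsg1 as [-> | ->]; lia.
    + left. apply functional_extensionality; intro i; rewrite (fin1 i). unfold sadd, site1. lia.
  - intros y Hy. apply HL. unfold segment in Hy. unfold sadd, site1. destruct Hsg1 as [-> | ->]; lia.
  - intros x Hx. exists X; split; auto. intros q Hq.
    apply HL in Hx. specialize (HXs q Hq). specialize (HmX q Hq).
    assert (E : (sg * sadd 1 x q Fin.F1 = sg * x Fin.F1 + sg * q Fin.F1)%Z) by (unfold sadd; ring).
    assert (Hsq : (- m <= sg * q Fin.F1)%Z) by (simpl in HmX; destruct Hsg1 as [-> | ->]; lia).
    destruct (Z_lt_le_dec (sg * sadd 1 x q Fin.F1) m).
    + left. unfold segment. lia.
    + right. rewrite HL. split; [lia|]. apply IZR_lt. lia.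
Qed.

Definition f1 : Fin.t 2 := Fin.F1.
Definition f2 : Fin.t 2 := Fin.FS Fin.F1.

Lemma fin2 (i : Fin.t 2) : i = f1 \/ i = f2.
Proof.
  pattern i; apply Fin.caseS'; [left; reflexivity|].
  intro p; pattern p; apply Fin.caseS'; [right; reflexivity|].
  intro q; apply (Fin.case0 (fun _ => _) q).
Qed.

Lemma dot2 (a b : vec 2) : dot 2 a b = a f1 * b f1 + a f2 * b f2.
Proof. unfold dot; simpl. unfold f1, f2. ring. Qed.

Definition vec2 (a b : R) : vec 2 := fun i => Fin.caseS' i (fun _ => R) a (fun _ => b).
Definition site2 (a b : Z) : site 2 := fun i => Fin.caseS' i (fun _ => Z) a (fun _ => b).

Lemma site2_f1 (a b : Z) : site2 a b f1 = a. Proof. reflexivity. Qed.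
Lemma site2_f2 (a b : Z) : site2 a b f2 = b. Proof. reflexivity. Qed.

Lemma site2_ext (x y : site 2) : x f1 = y f1 -> x f2 = y f2 -> x = y.
Proof. intros; apply functional_extensionality; intro i; destruct (fin2 i); subst; auto. Qed.

Lemma rule_in_hemisphere (U : list (list (site 2))) (v : vec 2)
    (Hsc : forall u, unit_vec 2 u -> dot 2 u v > 0 -> ~ stable 2 U u) (e : vec 2) :
  dot 2 e v > 0 -> exists X, In X U /\ forall y, In y X -> dot 2 (toR 2 y) e < 0.
Proof.
  intros He. rewrite dot2 in He.
  assert (Hpos : 0 < e f1 * e f1 + e f2 * e f2).
  { destruct (Req_dec (e f1) 0); destruct (Req_dec (e f2) 0); nra. }
  set (n := sqrt (e f1 * e f1 + e f2 * e f2)).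
  assert (Hn : 0 < n) by (apply sqrt_lt_R0; auto).
  assert (Hnn : n * n = e f1 * e f1 + e f2 * e f2) by (apply sqrt_sqrt; lra).
  set (u := fun i => e i / n).
  assert (Hu : unit_vec 2 u).
  { unfold unit_vec. rewrite dot2. unfold u.
    replace (e f1 / n * (e f1 / n) + e f2 / n * (e f2 / n))
      with ((e f1 * e f1 + e f2 * e f2) / (n * n)) by (field; lra).
    rewrite <- Hnn. field; lra. }
  assert (Huv : dot 2 u v > 0).
  { rewrite dot2. unfold u.
    replace (e f1 / n * v f1 + e f2 / n * v f2) with ((e f1 * v f1 + e f2 * v f2) / n) by (field; lra).
    apply Rdiv_lt_0_compat; lra. }
  destruct (unstable_has_rule 2 U u Hu (Hsc u Hu Huv)) as [X [HX HXu]].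
  exists X; split; auto. intros y Hy. specialize (HXu y Hy). rewrite dot2 in HXu |- *.
  unfold u in HXu. replace (toR 2 y f1 * e f1 + toR 2 y f2 * e f2) with
    (n * (toR 2 y f1 * (e f1 / n) + toR 2 y f2 * (e f2 / n))) by (field; lra).
  nra.
Qed.

Lemma pigeonhole (g : nat -> nat) (n m : nat) :
  (m < n)%nat -> (forall t, (t < n)%nat -> (g t < m)%nat) ->
  exists t t', (t < n)%nat /\ (t' < n)%nat /\ t <> t' /\ g t = g t'.
Proof.
  intros Hmn Hg. apply NNPP; intro Hno.
  assert (HND : NoDup (map g (seq 0 n))).
  { apply NoDup_map_NoDup_ForallPairs; [|apply seq_NoDup].
    intros a b Ha Hb Hab. apply in_seq in Ha, Hb.
    destruct (Nat.eq_dec a b); auto. exfalso; apply Hno; exists a, b; repeat split; auto; lia. }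
  assert (Hinc : incl (map g (seq 0 n)) (seq 0 m)).
  { intros y Hy. apply in_map_iff in Hy. destruct Hy as [t [<- Ht]]. apply in_seq in Ht.
    apply in_seq. specialize (Hg t ltac:(lia)). lia. }
  pose proof (NoDup_incl_length HND Hinc) as Hlen. rewrite length_map, !length_seq in Hlen. lia.
Qed.

Lemma up_close (a b : R) : up a = up b -> Rabs (a - b) < 1.
Proof.
  intros E. destruct (archimed a) as [Ha1 Ha2]. destruct (archimed b) as [Hb1 Hb2].
  rewrite E in Ha1, Ha2. apply Rabs_def1; lra.
Qed.

Lemma dirichlet (v1 v2 : R) (N : nat) : -1 <= v1 <= 1 -> -1 <= v2 <= 1 -> (1 <= N)%nat ->
  exists w1 w2 : Z, (w1 <> 0 \/ w2 <> 0)%Z /\ Rabs (- IZR w2 * v1 + IZR w1 * v2) < 1 / INR N.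
Proof.
  intros Hv1 Hv2 HN.
  (* the (K+1)^2 grid points (i, j) are coded by t = i (K+1) + j; the values
     i v2 - j v1 lie in [-2K, 2K], cut into 4KN+2 cells of length 1/N *)
  set (K := (4 * N + 1)%nat).
  set (fi := fun t : nat => (t / (K + 1))%nat). set (fj := fun t : nat => (t mod (K + 1))%nat).
  set (f := fun t => INR (fi t) * v2 - INR (fj t) * v1).
  set (c := (2 * K * N)%nat).
  set (g := fun t => Z.to_nat (up (INR N * f t) + Z.of_nat c)).
  assert (HNpos : 1 <= INR N) by (apply (le_INR 1); auto).
  assert (Hbnd : forall t, (t < (K+1)*(K+1))%nat ->
    (- Z.of_nat c < up (INR N * f t) <= Z.of_nat c + 1)%Z).
  { intros t Ht.
    assert (Hi : (fi t <= K)%nat) by (apply Nat.lt_succ_r, Nat.Div0.div_lt_upper_bound; lia).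
    assert (Hj : (fj t <= K)%nat) by (pose proof (Nat.mod_upper_bound t (K+1)); unfold fj; lia).
    apply le_INR in Hi, Hj. pose proof (pos_INR (fi t)). pose proof (pos_INR (fj t)).
    assert (Hf : - (2 * INR K) <= f t <= 2 * INR K) by (unfold f; split; nra).
    assert (Hc : INR c = 2 * INR K * INR N) by (unfold c; rewrite !mult_INR; simpl; ring).
    destruct (archimed (INR N * f t)) as [Hup1 Hup2]. split.
    - apply lt_IZR. rewrite opp_IZR, <- INR_IZR_INZ. nra.
    - apply le_IZR. rewrite plus_IZR, <- INR_IZR_INZ. nra. }
  destruct (pigeonhole g ((K+1)*(K+1)) (4 * K * N + 2)) as [t [t' [Ht [Ht' [Htt Hg]]]]].
  - unfold K. nia.
  - intros t Ht. unfold g. specialize (Hbnd t Ht). unfold c in *. lia.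
  - pose proof (Hbnd t Ht) as Hb1. pose proof (Hbnd t' Ht') as Hb2.
    assert (Eup : up (INR N * f t) = up (INR N * f t')) by (unfold g in Hg; lia).
    apply up_close in Eup.
    exists (Z.of_nat (fi t) - Z.of_nat (fi t'))%Z, (Z.of_nat (fj t) - Z.of_nat (fj t'))%Z. split.
    + apply NNPP; intro Hn. apply Htt.
      rewrite (Nat.div_mod_eq t (K+1)), (Nat.div_mod_eq t' (K+1)).
      unfold fi, fj in Hn. f_equal; [f_equal|]; lia.
    + replace (- IZR (Z.of_nat (fj t) - Z.of_nat (fj t')) * v1 +
               IZR (Z.of_nat (fi t) - Z.of_nat (fi t')) * v2) with (f t - f t')
        by (unfold f; rewrite !minus_IZR, <- !INR_IZR_INZ; ring).
      apply Rabs_def2 in Eup. destruct Eup as [E1 E2]. apply Rabs_def1;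
        apply (Rmult_lt_reg_l (INR N)); try lra; field_simplify; lra.
Qed.

Lemma rational_direction (v1 v2 : R) (N : nat) : v1 * v1 + v2 * v2 = 1 -> (1 <= N)%nat ->
  exists w1 w2 : Z, (w1 <> 0 \/ w2 <> 0)%Z /\
    Rabs (- IZR w2 * v1 + IZR w1 * v2) < 1 / INR N /\ IZR w1 * v1 + IZR w2 * v2 > 0.
Proof.
  intros Hv HN.
  assert (Hb1 : -1 <= v1 <= 1) by (split; nra).
  assert (Hb2 : -1 <= v2 <= 1) by (split; nra).
  destruct (dirichlet v1 v2 N Hb1 Hb2 HN) as [w1 [w2 [Hw Hc]]].
  set (c := - IZR w2 * v1 + IZR w1 * v2) in *. set (p := IZR w1 * v1 + IZR w2 * v2).
  (* p^2 + c^2 = |w|^2 >= 1 while c^2 < 1, so p <> 0 *)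
  assert (Hw2 : 1 <= IZR w1 * IZR w1 + IZR w2 * IZR w2).
  { rewrite <- !mult_IZR, <- plus_IZR. apply IZR_le. destruct Hw; nia. }
  assert (Hid : p * p + c * c = (IZR w1 * IZR w1 + IZR w2 * IZR w2) * (v1 * v1 + v2 * v2))
    by (unfold p, c; ring).
  assert (Hc1 : c * c < 1).
  { apply Rabs_def2 in Hc. assert (1 / INR N <= 1).
    { apply (Rmult_le_reg_l (INR N)); [apply (lt_INR 0); lia|].
      field_simplify; [apply (le_INR 1); lia | apply not_0_INR; lia]. }
    nra. }
  destruct (Rlt_dec 0 p) as [Hp|Hp].
  - exists w1, w2. repeat split; auto.
  - exists (- w1)%Z, (- w2)%Z. rewrite !opp_IZR. split; [lia|]. split.
    + replace (- - IZR w2 * v1 + - IZR w1 * v2) with (- c) by (unfold c; ring).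
      now rewrite Rabs_Ropp.
    + assert (p <> 0) by (intro E; rewrite E, Hv in Hid; nra). unfold p in *. lra.
Qed.

(* The best margin of a rule at s is a Lipschitz function of s, so its
   minimum over [-S, S] is attained and positive. *)
Section UniformInstability.
Variables (A : Type) (U : list (list A)) (a b : A -> R) (M S : R).

Definition rule_margin (X : list A) (s : R) : R := minl (map (fun y => -(a y + s * b y)) X).
Definition best_margin (s : R) : R := maxl (map (fun X => rule_margin X s) U).

Lemma rule_margin_le (X : list A) (s : R) (y : A) : In y X -> rule_margin X s <= -(a y + s * b y).
Proof. intros Hy. apply minl_le. apply in_map_iff. eauto. Qed.

Lemma rule_margin_attained (X : list A) (s : R) : X <> [] ->
  exists y, In y X /\ rule_margin X s = -(a y + s * b y).
Proof.
  intros HX. assert (Hne : map (fun y => -(a y + s * b y)) X <> []) by (destruct X; easy).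
  apply minl_in, in_map_iff in Hne. destruct Hne as [y [E Hy]]. eauto.
Qed.

Lemma best_margin_ge (X : list A) (s : R) : In X U -> rule_margin X s <= best_margin s.
Proof. intros HX. apply maxl_ge. apply in_map_iff. eauto. Qed.

Lemma best_margin_attained (s : R) : U <> [] -> exists X, In X U /\ best_margin s = rule_margin X s.
Proof.
  intros HU. assert (Hne : map (fun X => rule_margin X s) U <> []) by (destruct U; easy).
  apply maxl_in, in_map_iff in Hne. destruct Hne as [X [E HX]]. eauto.
Qed.

Hypothesis HUne : U <> [].
Hypothesis HXne : forall X, In X U -> X <> [].
Hypothesis HbM : forall X y, In X U -> In y X -> Rabs (b y) <= M.
Hypothesis HM : 0 <= M.
Hypothesis HS : 0 <= S.
Hypothesis Hcov : forall s, -S <= s <= S ->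
  exists X, In X U /\ forall y, In y X -> a y + s * b y < 0.

Lemma slope_perturbation (y : A) (s s' : R) (X : list A) : In X U -> In y X ->
  Rabs ((s - s') * b y) <= M * Rabs (s - s').
Proof.
  intros HX Hy. rewrite Rabs_mult. pose proof (HbM X y HX Hy).
  pose proof (Rabs_pos (s - s')). pose proof (Rabs_pos (b y)). nra.
Qed.

Lemma best_margin_lipschitz (s s' : R) : best_margin s <= best_margin s' + M * Rabs (s - s').
Proof.
  destruct (best_margin_attained s HUne) as [X [HX E]]. rewrite E.
  destruct (rule_margin_attained X s' (HXne X HX)) as [y [Hy E']].
  pose proof (best_margin_ge X s' HX). pose proof (rule_margin_le X s y Hy).
  pose proof (slope_perturbation y s s' X HX Hy).
  pose proof (Rle_abs (- ((s - s') * b y))) as Habs. rewrite Rabs_Ropp in Habs. lra.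
Qed.

Lemma best_margin_continuous (x0 : R) : continuity_pt best_margin x0.
Proof.
  intros eps Heps. exists (eps / (M + 1)). split; [apply Rdiv_lt_0_compat; lra|].
  intros x [_ Hd]. simpl in *. unfold R_dist in *.
  pose proof (best_margin_lipschitz x x0) as H1. pose proof (best_margin_lipschitz x0 x) as H2.
  rewrite Rabs_minus_sym in H2.
  assert (M * Rabs (x - x0) < eps).
  { apply (Rle_lt_trans _ ((M+1) * Rabs (x - x0))); [pose proof (Rabs_pos (x - x0)); nra|].
    apply (Rmult_lt_compat_l (M+1)) in Hd; [|lra].
    replace ((M + 1) * (eps / (M + 1))) with eps in Hd by (field; lra). lra. }
  apply Rabs_def1; lra.
Qed.

(* The minimum m0 of the best margin over [-S, S] is positive; lam =
   m0 / (M + 1) works. *)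
Lemma uniform_instability : exists lam, 0 < lam /\ forall s, -S <= s <= S ->
  exists X, In X U /\ forall y, In y X -> forall s', Rabs (s' - s) <= lam -> a y + s' * b y < 0.
Proof.
  destruct (continuity_ab_min best_margin (-S) S ltac:(lra) (fun c _ => best_margin_continuous c))
    as [s0 [Hmin Hs0]].
  set (m0 := best_margin s0) in *.
  assert (Hpos : 0 < m0).
  { destruct (Hcov s0 Hs0) as [X [HX HXv]].
    destruct (rule_margin_attained X s0 (HXne X HX)) as [y [Hy E]].
    pose proof (best_margin_ge X s0 HX). specialize (HXv y Hy). unfold m0. lra. }
  exists (m0 / (M + 1)). split; [apply Rdiv_lt_0_compat; lra|].
  intros s Hs. destruct (best_margin_attained s HUne) as [X [HX E]]. exists X; split; auto.
  intros y Hy s' Hs'. specialize (Hmin s Hs). pose proof (rule_margin_le X s y Hy).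
  pose proof (slope_perturbation y s' s X HX Hy). pose proof (Rle_abs ((s' - s) * b y)).
  assert (m0 / (M + 1) * M < m0).
  { replace (m0 / (M + 1) * M) with (m0 * (M / (M + 1))) by (field; lra).
    assert (M / (M + 1) < 1) by (apply (Rmult_lt_reg_r (M + 1)); [lra|]; field_simplify; lra).
    nra. }
  assert (M * Rabs (s' - s) <= m0 / (M + 1) * M) by nra.
  replace (a y + s' * b y) with ((a y + s * b y) + (s' - s) * b y) by ring. lra.
Qed.
End UniformInstability.

(* Integer coordinates of y along w = (w1, w2) and along its rotation
   w^perp = (-w2, w1) (both scaled by |w|). *)
Definition along (w1 w2 : Z) (y : site 2) : Z := (y f1 * w1 + y f2 * w2)%Z.
Definition across (w1 w2 : Z) (y : site 2) : Z := (- y f1 * w2 + y f2 * w1)%Z.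

Lemma along_add (w1 w2 : Z) (x y : site 2) :
  along w1 w2 (sadd 2 x y) = (along w1 w2 x + along w1 w2 y)%Z.
Proof. unfold along, sadd. ring. Qed.

Lemma across_add (w1 w2 : Z) (x y : site 2) :
  across w1 w2 (sadd 2 x y) = (across w1 w2 x + across w1 w2 y)%Z.
Proof. unfold across, sadd. ring. Qed.

Lemma abs_bilinear (a b c d : Z) :
  (Z.abs (a * c + b * d) <= (Z.abs a + Z.abs b) * (Z.abs c + Z.abs d))%Z.
Proof.
  pose proof (Z.abs_triangle (a * c) (b * d)) as Ht. rewrite !Z.abs_mul in Ht.
  pose proof (Z.abs_nonneg a). pose proof (Z.abs_nonneg b).
  pose proof (Z.abs_nonneg c). pose proof (Z.abs_nonneg d). nia.
Qed.

Lemma coords_bound (w1 w2 Y : Z) (y : site 2) : (Z.abs (y f1) + Z.abs (y f2) <= Y)%Z ->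
  (Z.abs (along w1 w2 y) <= Y * (Z.abs w1 + Z.abs w2) /\
   Z.abs (across w1 w2 y) <= Y * (Z.abs w1 + Z.abs w2))%Z.
Proof.
  intros Hy.
  assert (Hyw : ((Z.abs (y f1) + Z.abs (y f2)) * (Z.abs w1 + Z.abs w2)
                 <= Y * (Z.abs w1 + Z.abs w2))%Z)
    by (apply Z.mul_le_mono_nonneg_r; lia).
  pose proof (abs_bilinear (y f1) (y f2) w1 w2) as H1.
  pose proof (abs_bilinear (y f1) (y f2) (- w2) w1) as H2.
  rewrite Z.abs_opp, (Z.add_comm (Z.abs w2)) in H2.
  unfold along, across. replace (- y f1 * w2 + y f2 * w1)%Z with (y f1 * - w2 + y f2 * w1)%Z by ring.
  lia.
Qed.

(* Conversely, the original coordinates of x are bounded by its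
   coordinates along w and w^perp (recovered by |w|^2 x = A w + B w^perp). *)
Lemma site_coord_bound (n a b c d x : Z) : (1 <= n)%Z -> (Z.abs c <= n)%Z -> (Z.abs d <= n)%Z ->
  (n * x = a * c - b * d)%Z -> (Z.abs x <= Z.abs a + Z.abs b)%Z.
Proof.
  intros Hn Hc Hd E.
  assert (H2 : (Z.abs (a * c - b * d) <= Z.abs a * n + Z.abs b * n)%Z).
  { pose proof (Z.abs_triangle (a * c) (- (b * d))) as Ht. rewrite Z.abs_opp, !Z.abs_mul in Ht.
    pose proof (Z.abs_nonneg a). pose proof (Z.abs_nonneg b). nia. }
  rewrite <- E, Z.abs_mul, (Z.abs_eq n) in H2 by lia. nia.
Qed.

(* The data of a good direction w for the band construction: rule
   coordinates bounded by Mz; a rule XT (resp. XB) never pointing up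
   (resp. down), strictly backwards on the w-axis; and a uniform margin h
   for the rules working in the directions w + s w^perp, |s| <= Mz + 4. *)
Definition band_data (U : list (list (site 2))) (w1 w2 Mz : Z) (XT XB : list (site 2)) (h : R) :
    Prop :=
  (1 <= Mz)%Z /\ (1 <= w1 * w1 + w2 * w2)%Z /\
  (forall X y, In X U -> In y X ->
     (Z.abs (along w1 w2 y) <= Mz /\ Z.abs (across w1 w2 y) <= Mz)%Z) /\
  In XT U /\ In XB U /\
  (forall y, In y XT -> (across w1 w2 y <= 0 /\ (across w1 w2 y = 0 -> along w1 w2 y < 0))%Z) /\
  (forall y, In y XB -> (0 <= across w1 w2 y /\ (across w1 w2 y = 0 -> along w1 w2 y < 0))%Z) /\
  0 < h <= 1 /\
  (forall s, -(IZR Mz + 4) <= s <= IZR Mz + 4 -> exists X, In X U /\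
     forall y, In y X -> forall s', Rabs (s' - s) <= h ->
       IZR (along w1 w2 y) + s' * IZR (across w1 w2 y) < 0).

Section GoodDirection.
(* w is a nonzero integer vector, v the direction of the stable-free
   hemisphere, p = <w, v> and c = w x v. *)
Variables (U : list (list (site 2))) (w1 w2 Mz : Z) (p c : R).
Hypothesis HM : (1 <= Mz)%Z.
Hypothesis HAB : forall X y, In X U -> In y X ->
  (Z.abs (along w1 w2 y) <= Mz /\ Z.abs (across w1 w2 y) <= Mz)%Z.
Hypothesis Hrule : forall al be, al * p + be * c > 0 -> exists X, In X U /\
  forall y, In y X -> al * IZR (along w1 w2 y) + be * IZR (across w1 w2 y) < 0.

(* The directions eps w +- w^perp, eps = 1/(2 Mz), give the boundary rules. *)
Lemma boundary_rules : Rabs c < p / (2 * IZR Mz) -> exists XT XB, In XT U /\ In XB U /\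
  (forall y, In y XT -> (across w1 w2 y <= 0 /\ (across w1 w2 y = 0 -> along w1 w2 y < 0))%Z) /\
  (forall y, In y XB -> (0 <= across w1 w2 y /\ (across w1 w2 y = 0 -> along w1 w2 y < 0))%Z).
Proof.
  intros Hc. assert (HMr : 1 <= IZR Mz) by (apply IZR_le; lia).
  set (eps := 1 / (2 * IZR Mz)).
  assert (Hepos : 0 < eps) by (apply Rdiv_lt_0_compat; lra).
  assert (Hep : eps * p = p / (2 * IZR Mz)) by (unfold eps; field; lra).
  apply Rabs_def2 in Hc.
  destruct (Hrule eps 1 ltac:(lra)) as [XT [HXT HXTv]].
  destruct (Hrule eps (-1) ltac:(lra)) as [XB [HXB HXBv]].
  (* eps |A y| <= 1/2, so the sign of eps A y +- B y is that of +- B y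
     unless B y = 0 *)
  assert (HepA : forall X y, In X U -> In y X -> - (1/2) <= eps * IZR (along w1 w2 y) <= 1/2).
  { intros X y HX Hy. destruct (HAB X y HX Hy) as [Ha _].
    assert (Hab : Rabs (IZR (along w1 w2 y)) <= IZR Mz) by (rewrite <- abs_IZR; apply IZR_le; lia).
    assert (Heps : eps * IZR Mz = 1 / 2) by (unfold eps; field; lra).
    pose proof (Rle_abs (IZR (along w1 w2 y))) as Hle.
    pose proof (Rle_abs (- IZR (along w1 w2 y))) as Hge. rewrite Rabs_Ropp in Hge. nra. }
  exists XT, XB. do 2 (split; [assumption|]). split.
  - intros y Hy. specialize (HXTv y Hy). pose proof (HepA XT y HXT Hy). split.
    + apply Z.nlt_ge; intro Hb. apply Zlt_le_succ, IZR_le in Hb. simpl in Hb. lra.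
    + intros E. rewrite E in HXTv. apply lt_IZR. simpl in *. nra.
  - intros y Hy. specialize (HXBv y Hy). pose proof (HepA XB y HXB Hy). split.
    + apply Z.nlt_ge; intro Hb. assert (Hb' : (across w1 w2 y <= -1)%Z) by lia.
      apply IZR_le in Hb'. lra.
    + intros E. rewrite E in HXBv. apply lt_IZR. simpl in *. nra.
Qed.

Lemma slope_coverage : (IZR Mz + 4) * Rabs c < p ->
  forall s, -(IZR Mz + 4) <= s <= IZR Mz + 4 -> exists X, In X U /\
    forall y, In y X -> IZR (along w1 w2 y) + s * IZR (across w1 w2 y) < 0.
Proof.
  intros Hc s Hs. destruct (Hrule 1 s) as [X [HX HXv]].
  - assert (Rabs (s * c) <= (IZR Mz + 4) * Rabs c).
    { rewrite Rabs_mult. apply Rmult_le_compat_r; [apply Rabs_pos|]. apply Rabs_le; lra. }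
    pose proof (Rle_abs (- (s * c))) as Habs. rewrite Rabs_Ropp in Habs. lra.
  - exists X; split; auto. intros y Hy. specialize (HXv y Hy). lra.
Qed.
End GoodDirection.

Lemma rule_for_combination (U : list (list (site 2))) (v : vec 2)
    (Hsc : forall u, unit_vec 2 u -> dot 2 u v > 0 -> ~ stable 2 U u) (w1 w2 : Z) (al be : R) :
  al * (IZR w1 * v f1 + IZR w2 * v f2) + be * (- IZR w2 * v f1 + IZR w1 * v f2) > 0 ->
  exists X, In X U /\ forall y, In y X -> al * IZR (along w1 w2 y) + be * IZR (across w1 w2 y) < 0.
Proof.
  intros Hab.
  destruct (rule_in_hemisphere U v Hsc (vec2 (al * IZR w1 - be * IZR w2) (al * IZR w2 + be * IZR w1)))
    as [X [HX HXv]]; [rewrite dot2; simpl; lra|].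
  exists X; split; auto. intros y Hy. specialize (HXv y Hy). rewrite dot2 in HXv. simpl in HXv.
  unfold toR in HXv. unfold along, across. rewrite !plus_IZR, !mult_IZR, opp_IZR.
  replace (al * (IZR (y f1) * IZR w1 + IZR (y f2) * IZR w2)
           + be * (- IZR (y f1) * IZR w2 + IZR (y f2) * IZR w1))
    with (IZR (y f1) * (al * IZR w1 - be * IZR w2) + IZR (y f2) * (al * IZR w2 + be * IZR w1))
    by ring.
  exact HXv.
Qed.

(* The numerical heart of the choice of w: if the cross product
   c = w x v is below 1/(4Y + 20), then with Mz = Y |w|_1 it is small
   enough both for the boundary rules and for the fan of slopes
   |s| <= Mz + 4 (since p = <w, v> >= |w|_1 / 2). *)
Lemma direction_margins (Y w1 w2 : Z) (v1 v2 : R) :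
  (1 <= Y)%Z -> (w1 <> 0 \/ w2 <> 0)%Z -> v1 * v1 + v2 * v2 = 1 ->
  IZR w1 * v1 + IZR w2 * v2 > 0 ->
  let p := IZR w1 * v1 + IZR w2 * v2 in
  let c := - IZR w2 * v1 + IZR w1 * v2 in
  let Mz := IZR (Y * (Z.abs w1 + Z.abs w2)) in
  Rabs c < 1 / (4 * IZR Y + 20) -> Rabs c < p / (2 * Mz) /\ (Mz + 4) * Rabs c < p.
Proof.
  intros HY Hw0 Hv Hp p c Mz Hc.
  assert (HYr : 1 <= IZR Y) by (apply IZR_le; lia).
  set (Wm := IZR (Z.abs w1 + Z.abs w2)).
  assert (HWr : 1 <= Wm) by (apply IZR_le; destruct Hw0; lia).
  assert (HMr : Mz = IZR Y * Wm) by apply mult_IZR.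
  assert (Hcc : c * c <= 1 / 4).
  { apply Rabs_def2 in Hc. assert (1 / (4 * IZR Y + 20) <= 1 / 24).
    { apply Rmult_le_reg_l with (4 * IZR Y + 20); [lra|]. field_simplify; lra. }
    nra. }
  assert (Hpb : p >= Wm / 2).
  { assert (Hpp : p * p + c * c = IZR w1 * IZR w1 + IZR w2 * IZR w2).
    { transitivity ((IZR w1 * IZR w1 + IZR w2 * IZR w2) * (v1 * v1 + v2 * v2)); [unfold p, c; ring|].
      rewrite Hv; ring. }
    assert (HWm2 : Wm * Wm <= 2 * (IZR w1 * IZR w1 + IZR w2 * IZR w2)).
    { unfold Wm. rewrite <- !mult_IZR, <- plus_IZR, <- mult_IZR. apply IZR_le.
      rewrite <- (Z.abs_square w1), <- (Z.abs_square w2).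
      pose proof (Z.square_nonneg (Z.abs w1 - Z.abs w2)). nia. }
    assert (1 <= IZR w1 * IZR w1 + IZR w2 * IZR w2).
    { rewrite <- !mult_IZR, <- plus_IZR. apply IZR_le. destruct Hw0; nia. }
    assert (Hpp2 : p * p >= (Wm / 2) * (Wm / 2)) by nra.
    destruct (Rlt_dec p (Wm / 2)); [|lra].
    assert (Hp' : 0 < p) by (unfold p; lra).
    assert (p * p < (Wm / 2) * (Wm / 2)) by (apply Rmult_le_0_lt_compat; lra). lra. }
  split.
  - assert (Hinv : 1 / (4 * IZR Y + 20) < 1 / (4 * IZR Y))
      by (apply Rmult_lt_reg_l with ((4 * IZR Y + 20) * (4 * IZR Y)); [nra|]; field_simplify; lra).
    assert (p / (2 * Mz) >= 1 / (4 * IZR Y)).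
    { rewrite HMr. apply Rle_ge, (Rmult_le_reg_r (4 * IZR Y * Wm)); [nra|].
      field_simplify; nra. }
    lra.
  - assert (Rabs c * (Mz + 4) < Wm / 2).
    { rewrite HMr. apply Rle_lt_trans with (1 / (4 * IZR Y + 20) * (IZR Y * Wm + 4)).
      - apply Rmult_le_compat_r; [nra|lra].
      - apply Rmult_lt_reg_l with (2 * (4 * IZR Y + 20)); [lra|]. field_simplify; nra. }
    lra.
Qed.

(* A supercritical family in the plane has a good direction: take Y the
   l1-range of the rules and w with w x v < 1/(4Y + 20) (Dirichlet). *)
Lemma good_direction_exists (U : list (list (site 2))) :
  update_family 2 U -> supercritical 2 U ->
  exists w1 w2 Mz XT XB h, band_data U w1 w2 Mz XT XB h.
Proof.
  intros HU [v [Hv Hsc]].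
  assert (Hv1 : v f1 * v f1 + v f2 * v f2 = 1) by (unfold unit_vec in Hv; rewrite dot2 in Hv; lra).
  destruct (Z_list_bound (fun y : site 2 => Z.abs (y f1) + Z.abs (y f2))%Z (concat U))
    as [Y [HY1 HYb]].
  set (Nn := Z.to_nat (4 * Y + 20)).
  assert (HNn : INR Nn = IZR (4 * Y + 20))
    by (unfold Nn; rewrite INR_IZR_INZ, Z2Nat.id by lia; reflexivity).
  destruct (rational_direction (v f1) (v f2) Nn Hv1 ltac:(unfold Nn; lia))
    as [w1 [w2 [Hw0 [Hc Hp]]]].
  rewrite HNn, plus_IZR, mult_IZR in Hc.
  destruct (direction_margins Y w1 w2 (v f1) (v f2) HY1 Hw0 Hv1 Hp Hc) as [Hbd Hfan].
  set (Mz := (Y * (Z.abs w1 + Z.abs w2))%Z) in *.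
  assert (HMz : (1 <= Mz)%Z) by (unfold Mz; destruct Hw0; nia).
  assert (HAB : forall X y, In X U -> In y X ->
    (Z.abs (along w1 w2 y) <= Mz /\ Z.abs (across w1 w2 y) <= Mz)%Z).
  { intros X y HX Hy. apply coords_bound, (HYb y), in_concat. eauto. }
  pose proof (rule_for_combination U v Hsc w1 w2) as Hrule.
  destruct (boundary_rules U w1 w2 Mz _ _ HMz HAB Hrule Hbd) as [XT [XB [HXT [HXB [HXTp HXBp]]]]].
  destruct (uniform_instability (site 2) U (fun y => IZR (along w1 w2 y)) (fun y => IZR (across w1 w2 y))
      (IZR Mz) (IZR Mz + 4)) as [lam [Hlam HlamP]].
  - intro E. rewrite E in HXT. destruct HXT.
  - intros X HX. apply HU, HX.
  - intros X y HX Hy. rewrite <- abs_IZR. apply IZR_le, (HAB X y HX Hy).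
  - apply IZR_le; lia.
  - assert (0 <= IZR Mz) by (apply IZR_le; lia). lra.
  - exact (slope_coverage U w1 w2 Mz _ _ Hrule Hfan).
  - exists w1, w2, Mz, XT, XB, (Rmin 1 lam).
    refine (conj HMz (conj _ (conj HAB (conj HXT (conj HXB (conj HXTp (conj HXBp (conj _ _)))))))).
    + destruct Hw0; nia.
    + split; [apply Rmin_glb_lt; lra | apply Rmin_l].
    + intros s Hs. destruct (HlamP s Hs) as [X [HX HXv]]. exists X; split; auto.
      intros y Hy s' Hs'. apply HXv; auto. pose proof (Rmin_r 1 lam). lra.
Qed.

Lemma enum_bounded_sites (P : site 2 -> Prop) (N : Z) :
  (forall x, P x -> (Z.abs (x f1) <= N /\ Z.abs (x f2) <= N)%Z) ->
  exists L, forall x, In x L <-> P x.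
Proof.
  intros HP.
  set (zr := map (fun k => Z.of_nat k - N)%Z (seq 0 (Z.to_nat (2 * N + 1)))).
  assert (Hzr : forall a, (Z.abs a <= N)%Z -> In a zr).
  { intros a Ha. apply in_map_iff. exists (Z.to_nat (a + N)). split; [lia|]. apply in_seq. lia. }
  exists (filter (fun x => to_bool (P x)) (flat_map (fun a => map (fun b => site2 a b) zr) zr)).
  intros x. rewrite filter_In, to_bool_true. split; [tauto|]. intros Hx; split; [|exact Hx].
  destruct (HP x Hx) as [H1 H2]. apply in_flat_map. exists (x f1); split; [auto|].
  apply in_map_iff. exists (x f2); split; [now apply site2_ext|auto].
Qed.

(* The rectangle [0, a1[ u + [0, a2] u^perp of the statement, for the unit
   vector u = w / |w| and a1 = kk |w|, read in integer coordinates. *)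
Definition wnorm (w1 w2 : Z) : R := sqrt (IZR (w1 * w1 + w2 * w2)).
Definition wdir (w1 w2 : Z) : vec 2 := vec2 (IZR w1 / wnorm w1 w2) (IZR w2 / wnorm w1 w2).
Definition rectangle (w1 w2 Q H0 : Z) (x : site 2) : Prop :=
  (0 <= along w1 w2 x < Q /\ 0 <= across w1 w2 x <= H0)%Z.

Section Rectangle.
Variables (w1 w2 : Z).
Hypothesis Hw : (1 <= w1 * w1 + w2 * w2)%Z.
Let r := wnorm w1 w2.

Lemma wnorm_facts : 0 < r /\ r * r = IZR w1 * IZR w1 + IZR w2 * IZR w2.
Proof.
  assert (Hn : 1 <= IZR (w1 * w1 + w2 * w2)) by (apply IZR_le; lia).
  split; [apply sqrt_lt_R0; lra|]. unfold r, wnorm. rewrite sqrt_sqrt by lra.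
  rewrite plus_IZR, !mult_IZR. ring.
Qed.

Lemma wdir_unit : unit_vec 2 (wdir w1 w2).
Proof.
  destruct wnorm_facts as [Hr Hrr]. unfold unit_vec, wdir. rewrite dot2. simpl. fold r.
  replace (IZR w1 / r * (IZR w1 / r) + IZR w2 / r * (IZR w2 / r))
    with ((IZR w1 * IZR w1 + IZR w2 * IZR w2) / (r * r)) by (field; lra).
  rewrite <- Hrr. field; lra.
Qed.

Lemma lattice_point_on_axis (kk : Z) :
  forall i, toR 2 (site2 (kk * w1) (kk * w2)) i = IZR kk * r * wdir w1 w2 i.
Proof.
  destruct wnorm_facts as [Hr _]. intro i; unfold toR, wdir.
  destruct (fin2 i) as [->| ->]; simpl; fold r; rewrite mult_IZR; field; lra.
Qed.

Definition wperp (w1 w2 : Z) : vec 2 := vec2 (- IZR w2 / wnorm w1 w2) (IZR w1 / wnorm w1 w2).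

Lemma frame_coords (x : site 2) (t s : R) :
  (forall i, toR 2 x i = t * wdir w1 w2 i + s * wperp w1 w2 i) <->
  IZR (along w1 w2 x) = t * r /\ IZR (across w1 w2 x) = s * r.
Proof.
  destruct wnorm_facts as [Hr Hrr].
  assert (EA : IZR (along w1 w2 x) = IZR (x f1) * IZR w1 + IZR (x f2) * IZR w2)
    by (unfold along; rewrite plus_IZR, !mult_IZR; ring).
  assert (EB : IZR (across w1 w2 x) = - IZR (x f1) * IZR w2 + IZR (x f2) * IZR w1)
    by (unfold across; rewrite plus_IZR, !mult_IZR, opp_IZR; ring).
  unfold toR, wdir, wperp. fold r. rewrite EA, EB. split.
  - intros Hx. pose proof (Hx f1) as X1. pose proof (Hx f2) as X2. simpl in X1, X2.
    rewrite X1, X2. split.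
    + transitivity (t * (IZR w1 * IZR w1 + IZR w2 * IZR w2) / r); [field; lra|].
      rewrite <- Hrr. field; lra.
    + transitivity (s * (IZR w1 * IZR w1 + IZR w2 * IZR w2) / r); [field; lra|].
      rewrite <- Hrr. field; lra.
  - intros [Ht Hs] i.
    (* solve the 2x2 system: |w|^2 x = A w + B w^perp *)
    assert (E1 : IZR (x f1) * (r * r) = t * r * IZR w1 - s * r * IZR w2)
      by (rewrite Hrr, <- Ht, <- Hs; ring).
    assert (E2 : IZR (x f2) * (r * r) = t * r * IZR w2 + s * r * IZR w1)
      by (rewrite Hrr, <- Ht, <- Hs; ring).
    destruct (fin2 i) as [->| ->]; simpl; apply (Rmult_eq_reg_r (r * r)); try nra.
    + rewrite E1. field; lra.
    + rewrite E2. field; lra.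
Qed.

Lemma rectangle_shape (kk H0 : Z) : (0 <= H0)%Z ->
  R_shape 2 (wdir w1 w2) (IZR kk * r) (rectangle w1 w2 (kk * (w1 * w1 + w2 * w2)) H0).
Proof.
  intros HH0. destruct wnorm_facts as [Hr Hrr].
  assert (HQ : IZR (kk * (w1 * w1 + w2 * w2)) = IZR kk * r * r)
    by (rewrite Rmult_assoc, Hrr, mult_IZR, plus_IZR, !mult_IZR; ring).
  split; [intro E; discriminate E|]. intros _.
  exists (wperp w1 w2), (IZR H0 / r). split; [|split; [|split]].
  - unfold unit_vec, wperp. rewrite dot2. simpl. fold r.
    replace (- IZR w2 / r * (- IZR w2 / r) + IZR w1 / r * (IZR w1 / r))
      with ((IZR w1 * IZR w1 + IZR w2 * IZR w2) / (r * r)) by (field; lra).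
    rewrite <- Hrr. field; lra.
  - rewrite dot2. unfold wdir, wperp. simpl. fold r. field; lra.
  - apply Rmult_le_pos; [apply IZR_le; lia | left; apply Rinv_0_lt_compat; lra].
  - intros x. unfold rectangle. split.
    + intros [[Ha1 Ha2] [Hb1 Hb2]].
      exists (IZR (along w1 w2 x) / r), (IZR (across w1 w2 x) / r).
      apply IZR_le in Ha1, Hb1, Hb2. apply IZR_lt in Ha2. rewrite HQ in Ha2.
      split; [split|split; [split|]].
      * apply Rmult_le_pos; [lra | left; apply Rinv_0_lt_compat; lra].
      * apply (Rmult_lt_reg_r r); [lra|]. field_simplify; lra.
      * apply Rmult_le_pos; [lra | left; apply Rinv_0_lt_compat; lra].
      * apply Rmult_le_compat_r; [left; apply Rinv_0_lt_compat; lra| lra].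
      * apply frame_coords. split; field; lra.
    + intros [t [s [[Ht1 Ht2] [[Hs1 Hs2] Hx]]]]. apply frame_coords in Hx as [EA EB].
      assert (Hs2' : s * r <= IZR H0).
      { apply (Rmult_le_compat_r r) in Hs2; [|lra].
        replace (IZR H0 / r * r) with (IZR H0) in Hs2 by (field; lra). lra. }
      split; split.
      * apply le_IZR. rewrite EA. simpl. nra.
      * apply lt_IZR. rewrite EA, HQ. nra.
      * apply le_IZR. rewrite EB. simpl. nra.
      * apply le_IZR. rewrite EB. lra.
Qed.
End Rectangle.

Lemma div_bounds (b W : Z) : (0 < W)%Z -> ((b / W) * W <= b < (b / W) * W + W)%Z.
Proof.
  intros HW. pose proof (Z.div_mod b W ltac:(lia)). pose proof (Z.mod_pos_bound b W HW). lia.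
Qed.

(* In the coordinates A (along w) and B (across w)
   the strip 0 <= B <= height is cut into bands of width 2 Mz.  The
   potential is A + profile(B) with profile a convex piecewise-linear
   function of slope slope k on band k; slopes increase by h from band to
   band, from below -Mz on the bottom band (where XB is used) to above Mz
   on the top band (where XT is used).  Each rule moves B by at most Mz,
   i.e. to a neighbouring band, and the margin h makes a single rule
   decrease the potential whichever neighbouring band is reached. *)
Section Bands.
Variables (U : list (list (site 2))) (w1 w2 Mz : Z) (XT XB : list (site 2)) (h : R).
Local Notation A := (along w1 w2).
Local Notation B := (across w1 w2).
Hypothesis HM : (1 <= Mz)%Z.
Hypothesis Hw : (1 <= w1 * w1 + w2 * w2)%Z.
Hypothesis HAB : forall X y, In X U -> In y X -> (Z.abs (A y) <= Mz /\ Z.abs (B y) <= Mz)%Z.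
Hypothesis HXT : In XT U.
Hypothesis HXB : In XB U.
Hypothesis HXTp : forall y, In y XT -> (B y <= 0 /\ (B y = 0 -> A y < 0))%Z.
Hypothesis HXBp : forall y, In y XB -> (0 <= B y /\ (B y = 0 -> A y < 0))%Z.
Hypothesis Hh : 0 < h <= 1.
Hypothesis Hlam : forall s, -(IZR Mz + 4) <= s <= IZR Mz + 4 -> exists X, In X U /\
  forall y, In y X -> forall s', Rabs (s' - s) <= h -> IZR (A y) + s' * IZR (B y) < 0.

Definition band_width : Z := (2 * Mz)%Z.
Definition slope0 : R := - IZR Mz - 1 - 2 * h.
Definition nbands : Z := up ((2 * IZR Mz + 1 + 2 * h) / h).
Definition slope (k : Z) : R := slope0 + IZR k * h.
Definition height : Z := ((nbands + 2) * band_width - Mz)%Z.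
(* the affine function of slope (slope j) carrying the profile on band j *)
Definition line (j b : Z) : R := slope j * IZR b - h * IZR band_width * IZR (j * (j + 1)) / 2.
Definition profile (b : Z) : R := line (b / band_width) b.
Definition potential (x : site 2) : R := IZR (A x) + profile (B x).
Definition profile_bound : R := (IZR Mz + 3) * IZR height.

Lemma band_width_pos : (0 < band_width)%Z.
Proof. unfold band_width; lia. Qed.

(* The inner slopes go from slope 1 = -Mz-1-h up to slope nbands in ]Mz, Mz+1+h]. *)
Lemma nbands_facts : IZR nbands * h > 2 * IZR Mz + 1 + 2 * h /\
  IZR nbands * h <= 2 * IZR Mz + 1 + 3 * h /\ (1 <= nbands)%Z.
Proof.
  destruct (archimed ((2 * IZR Mz + 1 + 2 * h) / h)) as [H1 H2]. fold nbands in H1, H2.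
  assert (HMr : 1 <= IZR Mz) by (apply IZR_le; lia).
  assert (E : (2 * IZR Mz + 1 + 2 * h) / h * h = 2 * IZR Mz + 1 + 2 * h) by (field; lra).
  split; [|split].
  - apply (Rmult_lt_compat_r h) in H1; lra.
  - assert (Hn : IZR nbands <= (2 * IZR Mz + 1 + 2 * h) / h + 1) by lra.
    apply (Rmult_le_compat_r h) in Hn; lra.
  - assert ((2 * IZR Mz + 1 + 2 * h) / h > 0) by (apply Rdiv_lt_0_compat; lra).
    assert (0 < nbands)%Z by (apply lt_IZR; simpl; lra). lia.
Qed.

(* The profile is the upper envelope of the lines: it is convex. *)
Lemma line_le_profile (j b : Z) : line j b <= profile b.
Proof.
  unfold profile. set (k := (b / band_width)%Z).
  destruct (div_bounds b band_width band_width_pos) as [Hk1 Hk2]. fold k in Hk1, Hk2.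
  assert (E : line k b - line j b =
    h * ((IZR k - IZR j) * (IZR b - IZR band_width * (IZR k + IZR j + 1) / 2))).
  { unfold line, slope. rewrite !mult_IZR, !plus_IZR. simpl. field. }
  assert (0 <= (IZR k - IZR j) * (IZR b - IZR band_width * (IZR k + IZR j + 1) / 2)).
  { destruct (Z_lt_le_dec j k) as [Hjk|Hjk].
    - assert (0 <= band_width * (k - j - 1))%Z by (apply Z.mul_nonneg_nonneg; lia).
      assert (Hr : (0 <= 2 * b - band_width * (k + j + 1))%Z) by lia.
      apply IZR_le in Hr. rewrite minus_IZR, mult_IZR, mult_IZR, !plus_IZR in Hr. simpl in Hr.
      apply IZR_lt in Hjk. nra.
    - destruct (Z.eq_dec j k) as [->|Hne]; [rewrite Rminus_diag; lra|].
      assert (0 <= band_width * (j - k - 1))%Z by (apply Z.mul_nonneg_nonneg; lia).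
      assert (Hr : (2 * b - band_width * (k + j + 1) <= 0)%Z) by lia.
      apply IZR_le in Hr. rewrite minus_IZR, mult_IZR, mult_IZR, !plus_IZR in Hr. simpl in Hr.
      apply IZR_le in Hjk. nra. }
  nra.
Qed.

Lemma potential_decreases (x y : site 2) :
  IZR (A y) + slope ((B x + B y) / band_width) * IZR (B y) < 0 ->
  potential (sadd 2 x y) < potential x.
Proof.
  intros Hv. unfold potential in *. rewrite along_add, across_add, plus_IZR.
  set (k := ((across w1 w2 x + across w1 w2 y) / band_width)%Z) in *.
  pose proof (line_le_profile k (across w1 w2 x)).
  assert (profile (across w1 w2 x + across w1 w2 y) = line k (across w1 w2 x + across w1 w2 y))
    by reflexivity.
  assert (line k (across w1 w2 x + across w1 w2 y) - line k (across w1 w2 x)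
          = slope k * IZR (across w1 w2 y)) by (unfold line; rewrite plus_IZR; ring).
  lra.
Qed.

Lemma band_of_step (b by_ : Z) : (Z.abs by_ <= Mz)%Z ->
  (b / band_width - 1 <= (b + by_) / band_width <= b / band_width + 1)%Z.
Proof.
  intros Hby. pose proof band_width_pos as HW.
  destruct (div_bounds b band_width HW). destruct (div_bounds (b + by_) band_width HW).
  unfold band_width in *. nia.
Qed.

Lemma bottom_band_rule (x : site 2) : (0 <= B x)%Z -> (B x / band_width = 0)%Z ->
  forall y, In y XB -> (0 <= B x + B y)%Z /\
    IZR (A y) + slope ((B x + B y) / band_width) * IZR (B y) < 0.
Proof.
  intros Hx0 Hk y Hy. destruct (HXBp y Hy) as [Hb Hb0]. destruct (HAB XB y HXB Hy) as [Ha Hb'].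
  pose proof (band_of_step (B x) (B y) Hb') as Hk'. rewrite Hk in Hk'.
  assert (Hk'0 : (0 <= (B x + B y) / band_width)%Z) by (apply Z.div_pos; [lia|apply band_width_pos]).
  split; [lia|].
  assert (Hs : slope ((B x + B y) / band_width) < - IZR Mz).
  { unfold slope, slope0. assert (IZR ((B x + B y) / band_width) <= 1) by (apply IZR_le; lia).
    assert (0 <= IZR ((B x + B y) / band_width)) by (apply IZR_le; lia). nra. }
  destruct (Z.eq_dec (B y) 0) as [Eb|Nb].
  - rewrite Eb. specialize (Hb0 Eb). apply IZR_lt in Hb0. simpl. lra.
  - assert (Hb1 : 1 <= IZR (B y)) by (apply IZR_le; lia).
    assert (HA : IZR (A y) <= IZR Mz) by (apply IZR_le; lia).
    assert (HMr : 1 <= IZR Mz) by (apply IZR_le; lia). nra.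
Qed.

Lemma top_band_rule (x : site 2) : (B x <= height)%Z -> (B x / band_width = nbands + 1)%Z ->
  forall y, In y XT -> (B x + B y <= height)%Z /\
    IZR (A y) + slope ((B x + B y) / band_width) * IZR (B y) < 0.
Proof.
  intros HxH Hk y Hy. destruct (HXTp y Hy) as [Hb Hb0]. destruct (HAB XT y HXT Hy) as [Ha Hb'].
  pose proof (band_of_step (B x) (B y) Hb') as Hk'. rewrite Hk in Hk'.
  destruct nbands_facts as [Hm1 [Hm2 Hm3]].
  split; [lia|].
  assert (Hs : slope ((B x + B y) / band_width) > IZR Mz).
  { unfold slope, slope0. assert (IZR nbands <= IZR ((B x + B y) / band_width)) by (apply IZR_le; lia).
    nra. }
  destruct (Z.eq_dec (B y) 0) as [Eb|Nb].
  - rewrite Eb. specialize (Hb0 Eb). apply IZR_lt in Hb0. simpl. lra.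
  - assert (Hb1 : IZR (B y) <= -1) by (apply IZR_le; lia).
    assert (HA : IZR (A y) <= IZR Mz) by (apply IZR_le; lia).
    assert (HMr : 1 <= IZR Mz) by (apply IZR_le; lia). nra.
Qed.

Lemma inner_band_rule (x : site 2) : (1 <= B x / band_width <= nbands)%Z ->
  exists X, In X U /\ forall y, In y X ->
    IZR (A y) + slope ((B x + B y) / band_width) * IZR (B y) < 0.
Proof.
  intros Hk. set (k := (B x / band_width)%Z) in *.
  destruct nbands_facts as [Hm1 [Hm2 Hm3]].
  assert (HMr : 1 <= IZR Mz) by (apply IZR_le; lia).
  assert (Hkr : 1 <= IZR k <= IZR nbands) by (split; apply IZR_le; lia).
  destruct (Hlam (slope k)) as [X [HX HXv]]; [unfold slope, slope0; split; nra|].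
  exists X; split; auto. intros y Hy. destruct (HAB X y HX Hy) as [_ Hb'].
  pose proof (band_of_step (B x) (B y) Hb') as Hk'. fold k in Hk'.
  apply HXv; auto. unfold slope.
  replace (slope0 + IZR ((B x + B y) / band_width) * h - (slope0 + IZR k * h))
    with (IZR ((B x + B y) / band_width - k) * h) by (rewrite minus_IZR; ring).
  rewrite Rabs_mult, (Rabs_right h) by lra.
  assert (Rabs (IZR ((B x + B y) / band_width - k)) <= 1) by (rewrite <- abs_IZR; apply IZR_le; lia).
  pose proof (Rabs_pos (IZR ((B x + B y) / band_width - k))). nra.
Qed.

Lemma band_rule (x : site 2) : (0 <= B x <= height)%Z -> exists X, In X U /\ forall y, In y X ->
  (0 <= B (sadd 2 x y) <= height)%Z /\ potential (sadd 2 x y) < potential x.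
Proof.
  intros Hx. destruct nbands_facts as [_ [_ Hm3]]. pose proof band_width_pos as HW.
  destruct (div_bounds (B x) band_width HW) as [Hk1 Hk2].
  assert (HH : height = (nbands * band_width + band_width + Mz)%Z) by (unfold height, band_width; ring).
  assert (EW : band_width = (2 * Mz)%Z) by reflexivity.
  assert (Hk : (0 <= B x / band_width <= nbands + 1)%Z).
  { split; [apply Z.div_pos; lia|]. apply Z.lt_succ_r, Z.div_lt_upper_bound; [lia|].
    unfold band_width in *; lia. }
  assert (HB : forall y, B (sadd 2 x y) = (B x + B y)%Z) by (intro; apply across_add).
  destruct (Z.eq_dec (B x / band_width) 0) as [E0|N0];
    [|destruct (Z.eq_dec (B x / band_width) (nbands + 1)) as [E1|N1]].
  - exists XB; split; auto. intros y Hy. rewrite HB.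
    destruct (bottom_band_rule x ltac:(lia) E0 y Hy) as [Hr Hv].
    destruct (HAB XB y HXB Hy). rewrite E0 in Hk2.
    split; [lia|]. now apply potential_decreases.
  - exists XT; split; auto. intros y Hy. rewrite HB.
    destruct (top_band_rule x ltac:(lia) E1 y Hy) as [Hr Hv].
    destruct (HAB XT y HXT Hy). rewrite E1 in Hk1.
    assert (E : ((nbands + 1) * band_width = nbands * band_width + band_width)%Z) by ring.
    split; [lia|]. now apply potential_decreases.
  - destruct (inner_band_rule x ltac:(lia)) as [X [HX HXv]]. exists X; split; auto.
    intros y Hy. rewrite HB. destruct (HAB X y HX Hy) as [_ Hb'].
    assert (1 * band_width <= B x / band_width * band_width)%Z
      by (apply Z.mul_le_mono_nonneg_r; lia).
    assert (B x / band_width * band_width <= nbands * band_width)%Z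
      by (apply Z.mul_le_mono_nonneg_r; lia).
    split; [clear HB; set (k := (B x / band_width)%Z) in *; clearbody k; lia|].
    now apply potential_decreases, HXv.
Qed.

Lemma profile_bounded (b : Z) : (0 <= b <= height)%Z -> - profile_bound <= profile b <= profile_bound.
Proof.
  intros Hb. destruct nbands_facts as [Hm1 [Hm2 Hm3]].
  assert (HMr : 1 <= IZR Mz) by (apply IZR_le; lia).
  assert (Hbr : 0 <= IZR b <= IZR height) by (split; apply IZR_le; lia).
  unfold profile_bound. split.
  - pose proof (line_le_profile 0 b) as Hl. unfold line, slope, slope0 in Hl. simpl in Hl. nra.
  - unfold profile. set (k := (b / band_width)%Z).
    destruct (div_bounds b band_width band_width_pos) as [Hk1 Hk2]. fold k in Hk1, Hk2.
    assert (Hk0 : (0 <= k <= nbands + 1)%Z) by (unfold height, band_width in *; nia).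
    assert (Hkr : 0 <= IZR k <= IZR nbands + 1)
      by (split; [apply IZR_le; lia| rewrite <- (plus_IZR nbands 1); apply IZR_le; lia]).
    assert (Hkk : 0 <= IZR (k * (k + 1))) by (apply IZR_le; nia).
    assert (HWr : 0 < IZR band_width) by (apply IZR_lt, band_width_pos).
    assert (0 <= h * IZR band_width * IZR (k * (k + 1)) / 2).
    { apply Rmult_le_pos; [|lra]. apply Rmult_le_pos; [|auto]. nra. }
    assert (slope k <= IZR Mz + 2) by (unfold slope, slope0; nra).
    unfold line. nra.
Qed.

(* The rectangle Rset = {0 <= A < Q, 0 <= B <= height}, with Q a multiple
   of |w|^2 so that z = scale w is a lattice point with A z = Q, B z = 0,
   and Q > Mz + 2 profile_bound.  The swept region lies beyond Rset, in
   the strip, below a level of the potential; it contains z + Rset and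
   is contained in A < 3Q, i.e. in (z + Rset) u (2z + Rset). *)
Definition scale : Z := up (IZR Mz + 2 * profile_bound + 1).
Definition Q : Z := (scale * (w1 * w1 + w2 * w2))%Z.
Definition swept (x : site 2) : Prop :=
  (Q <= A x /\ 0 <= B x <= height)%Z /\ potential x < 2 * IZR Q + profile_bound.
Definition shift : site 2 := site2 (scale * w1) (scale * w2).

Lemma height_pos : (0 < height)%Z.
Proof. destruct nbands_facts as [_ [_ Hm3]]. unfold height, band_width. nia. Qed.

Lemma Q_large : (1 <= scale)%Z /\ IZR Mz + 2 * profile_bound < IZR Q /\ 0 <= profile_bound.
Proof.
  assert (HMr : 1 <= IZR Mz) by (apply IZR_le; lia).
  assert (HG : 0 <= profile_bound).
  { pose proof height_pos. unfold profile_bound. apply Rmult_le_pos; [lra|apply IZR_le; lia]. }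
  destruct (archimed (IZR Mz + 2 * profile_bound + 1)) as [Hup _]. fold scale in Hup.
  assert (Hs : (1 <= scale)%Z) by (assert (0 < scale)%Z by (apply lt_IZR; lra); lia).
  assert (HQ : IZR scale <= IZR Q) by (apply IZR_le; unfold Q; nia).
  repeat split; auto; lra.
Qed.

Lemma shift_coords : along w1 w2 shift = Q /\ across w1 w2 shift = 0%Z.
Proof. unfold along, across, shift, Q; simpl. split; ring. Qed.

(* The swept region lies in A < 3Q, since the profile varies by at most 2 profile_bound. *)
Lemma swept_along_lt (x : site 2) : swept x -> (A x < 3 * Q)%Z.
Proof.
  intros [[Ha Hb] Ht]. destruct Q_large as [_ [HQ _]].
  pose proof (profile_bounded (B x) Hb) as [Gl _]. unfold potential in Ht.
  assert (HMr : 0 <= IZR Mz) by (apply IZR_le; lia).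
  apply lt_IZR. rewrite mult_IZR. simpl. lra.
Qed.

Lemma swept_bounded (x : site 2) : swept x ->
  (Z.abs (x f1) <= 3 * Q + height /\ Z.abs (x f2) <= 3 * Q + height)%Z.
Proof.
  intros Hx. pose proof (swept_along_lt x Hx) as HA3. destruct Hx as [[Ha Hb] _].
  assert (Hw1 : (Z.abs w1 <= w1 * w1 + w2 * w2)%Z) by (rewrite <- (Z.abs_square w1); nia).
  assert (Hw2 : (Z.abs w2 <= w1 * w1 + w2 * w2)%Z) by (rewrite <- (Z.abs_square w2); nia).
  split.
  - pose proof (site_coord_bound _ (A x) (B x) w1 w2 (x f1) Hw Hw1 Hw2
      ltac:(unfold along, across; ring)). lia.
  - pose proof (site_coord_bound _ (A x) (B x) w2 (- w1) (x f2) Hw Hw2 ltac:(rewrite Z.abs_opp; lia)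
      ltac:(unfold along, across; ring)). lia.
Qed.

(* The swept region can be swept: the rule given by band_rule leads either
   into Rset (when A drops below Q) or to a swept site of lower potential. *)
Lemma swept_sweepable (L : list (site 2)) : (forall x, In x L <-> swept x) ->
  sweepable 2 U (rectangle w1 w2 Q height) L potential.
Proof.
  intros HL x Hx. apply HL in Hx. destruct Q_large as [_ [HQ HG]].
  destruct Hx as [[Ha Hb] Ht].
  destruct (band_rule x Hb) as [X [HX HXv]]. exists X; split; auto.
  intros y Hy. destruct (HXv y Hy) as [Hb' Hlt]. destruct (HAB X y HX Hy) as [HAy _].
  assert (HQM : (Mz < Q)%Z) by (apply lt_IZR; lra).
  destruct (Z_lt_le_dec (A x + A y) Q).
  - left. unfold rectangle. rewrite along_add. lia.
  - right. split; [|exact Hlt]. apply HL. split; [rewrite along_add; lia|lra].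
Qed.

Lemma shifted_rectangle_swept (y : site 2) : rectangle w1 w2 Q height y -> swept (sadd 2 shift y).
Proof.
  intros [[Ha1 Ha2] [Hb1 Hb2]]. destruct shift_coords as [HAz HBz].
  destruct Q_large as [_ [HQ _]].
  unfold swept, potential. rewrite along_add, across_add, HAz, HBz.
  split; [lia|]. simpl Z.add.
  pose proof (profile_bounded (B y) ltac:(lia)) as [_ Gu].
  assert (IZR (A y) < IZR Q) by (apply IZR_lt; lia). rewrite plus_IZR. lra.
Qed.

Lemma swept_in_shifts (x : site 2) : swept x ->
  exists y, rectangle w1 w2 Q height y /\ (x = sadd 2 shift y \/ x = sadd 2 (sscale 2 2 shift) y).
Proof.
  intros Hx. pose proof (swept_along_lt x Hx) as HA3. destruct Hx as [[Ha Hb] _].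
  set (back := fun k : Z => site2 (x f1 - k * (scale * w1)) (x f2 - k * (scale * w2))).
  assert (Hback : forall k, A (back k) = (A x - k * Q)%Z /\ B (back k) = B x).
  { intros k. unfold back, along, across, Q; simpl. split; ring. }
  destruct (Z_lt_le_dec (A x) (2 * Q)) as [Hl|Hl];
    [exists (back 1%Z) | exists (back 2%Z)]; destruct (Hback 1%Z); destruct (Hback 2%Z);
    (split; [unfold rectangle; lia|]).
  - left. apply site2_ext; unfold sadd, back, shift; rewrite !site2_f1 || rewrite !site2_f2; ring.
  - right. apply site2_ext; unfold sadd, sscale, back, shift;
      rewrite !site2_f1 || rewrite !site2_f2; ring.
Qed.

Lemma dim2_conclusion : theorem9_conclusion 2 U.
Proof.
  destruct (enum_bounded_sites swept (3 * Q + height) swept_bounded) as [L HL].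
  pose proof height_pos. destruct Q_large as [Hs _].
  apply (theorem9_of_sweep 2 U (wdir w1 w2) (IZR scale * wnorm w1 w2) shift
           (rectangle w1 w2 Q height) L potential).
  - exact (wdir_unit w1 w2 Hw).
  - apply Rmult_lt_0_compat; [apply IZR_lt; lia | apply (wnorm_facts w1 w2 Hw)].
  - apply lattice_point_on_axis, Hw.
  - apply rectangle_shape; [exact Hw|lia].
  - exists (site2 0 0). unfold rectangle, along, across, Q; simpl. nia.
  - intros x Hx. now apply swept_in_shifts, HL.
  - intros y Hy. now apply HL, shifted_rectangle_swept.
  - now apply swept_sweepable.
Qed.
End Bands.

Lemma theorem9_dim2 (U : list (list (site 2))) :
  update_family 2 U -> supercritical 2 U -> theorem9_conclusion 2 U.
Proof.
  intros HU Hsc.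
  destruct (good_direction_exists U HU Hsc)
    as [w1 [w2 [Mz [XT [XB [h [HM [Hw [HAB [HXT [HXB [HXTp [HXBp [Hh Hlam]]]]]]]]]]]]]].
  exact (dim2_conclusion U w1 w2 Mz XT XB h HM Hw HAB HXT HXB HXTp HXBp Hh Hlam).
Qed.

Theorem mainTheorem9 (d : nat) (Hd : d = 1%nat \/ d = 2%nat)
    (U : list (list (site d))) (HU : update_family d U)
    (Hsc : supercritical d U) :
  exists (u : vec d) (a1 : R) (z : site d) (Rset : site d -> Prop)
         (xs : list (site d)),
    unit_vec d u /\ 0 < a1 /\
    (* z = a1 u, which lies in Z^d *)
    (forall i, toR d z i = a1 * u i) /\
    R_shape d u a1 Rset /\
    (exists y, Rset y) /\
    (forall x, In x xs ->
       exists y, Rset y /\ (x = sadd d z y \/ x = sadd d (sscale d 2 z) y)) /\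
    forall (P0 P1 : clocks d) (eta : trajectory d),
      harris_kcm d U P0 P1 eta ->
      forall (s : R) (ts : list R),
        length ts = length xs ->
        incr_from s ts ->
        Forall2 (fun x t => P0 x t) xs ts ->
        (forall y, Rset y -> eta s y = Zero) ->
        (forall x r, (Rset x \/ In x xs) -> s < r <= last ts s -> ~ P1 x r) ->
        forall y, Rset y -> eta (last ts s) (sadd d z y) = Zero.
Proof.
  destruct Hd as [-> | ->].
  - exact (theorem9_dim1 U Hsc).
  - exact (theorem9_dim2 U HU Hsc).
Qed.
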